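(* Let $(G,M,\Delta)$ be a Garside structure and $(H,N,\delta)$ a parabolic substructure with $H\ne\{1\}$. Let $\mathcal S=\mathrm{Div}(\Delta)\setminus\{1\}$ and let $d$ be the word metric on $G$ with respect to $\mathcal S$. Then $G$ has $5$-fellow projections on $H$ with respect to $\mathcal S$: for all $\alpha_1,\alpha_2\in G$ with $d(\alpha_1,\alpha_2)=1$ and every $\beta_1\in\pi_H(\alpha_1)$ there exists $\beta_2\in\pi_H(\alpha_2)$ with $d(\beta_1,\beta_2)\le 5$.
   Context: Let $G$ be a group and $M$ a submonoid with $M\cap M^{-1}=\{1\}$. Define $\alpha\le_L\beta$ iff $\alpha^{-1}\beta\in M$, and $\alpha\le_R\beta$ iff $\beta\alpha^{-1}\in M$. For $a\in M$ let $\mathrm{Div}_L(a)=\{b\in M: b\le_L a\}$, $\mathrm{Div}_R(a)=\{b\in M: b\le_R a\}$; $a$ is balanced if these coincide, and then $\mathrm{Div}(a)$ denotes this set. $M$ is Noetherian if each $a\in M$ admits an $n$ such that $a$ is not a product of more than $n$ non-trivial factors. A Garside structure $(G,M,\Delta)$: $\Delta\in M$ balanced, $M$ Noetherian, $\mathrm{Div}(\Delta)$ finite and generating $M$ as a monoid and $G$ as a group, $(G,\le_L)$ a lattice. A parabolic substructure $(H,N,\delta)$: $\delta\in M$ balanced, $H$ (resp. $N$) the subgroup (resp. submonoid) generated by $\mathrm{Div}(\delta)$, and $\mathrm{Div}(\delta)=\mathrm{Div}(\Delta)\cap N$. The word metric is $d(\alpha,\beta)=\lg(\alpha^{-1}\beta)$,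 with $\lg$ the word length with respect to $\mathcal S$; $d(\alpha,H)=\min_{\beta\in H}d(\alpha,\beta)$, and the projection of $\alpha$ on $H$ is $\pi_H(\alpha)=\{\beta\in H: d(\alpha,\beta)=d(\alpha,H)\}$. *)

From Stdlib Require Import List Arith.
Import ListNotations.

Section GroupDefs.
Context {G : Type} (mul : G -> G -> G) (one : G) (inv : G -> G).

Definition is_group : Prop :=
  (forall x y z, mul x (mul y z) = mul (mul x y) z) /\
  (forall x, mul one x = x) /\ (forall x, mul x one = x) /\
  (forall x, mul (inv x) x = one) /\ (forall x, mul x (inv x) = one).

Definition prodl (l : list G) : G := fold_right mul one l.

Definition letter (p : bool * G) : G := if fst p then snd p else inv (snd p).
Definition eval_word (w : list (bool * G)) : G := prodl (map letter w).

Definition is_submonoid (M : G -> Prop) : Prop :=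
  M one /\ forall x y, M x -> M y -> M (mul x y).

Definition pointed (M : G -> Prop) : Prop :=
  forall x, M x -> M (inv x) -> x = one.

Definition leL (M : G -> Prop) (a b : G) : Prop := M (mul (inv a) b).
Definition leR (M : G -> Prop) (a b : G) : Prop := M (mul b (inv a)).

Definition DivL (M : G -> Prop) (a b : G) : Prop := M b /\ leL M b a.
Definition DivR (M : G -> Prop) (a b : G) : Prop := M b /\ leR M b a.

Definition balanced (M : G -> Prop) (a : G) : Prop :=
  M a /\ forall b, DivL M a b <-> DivR M a b.

(* Div(a) (meaningful for balanced a, where it equals Div_R(a)) *)
Definition Div (M : G -> Prop) (a : G) : G -> Prop := DivL M a.

Definition noetherian (M : G -> Prop) : Prop :=
  forall a, M a -> exists n, forall l : list G,
    Forall (fun x => M x /\ x <> one) l -> prodl l = a -> length l <= n.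

Definition finite_pred (P : G -> Prop) : Prop :=
  exists l : list G, forall x, P x -> In x l.

Definition gen_monoid (P : G -> Prop) (g : G) : Prop :=
  exists l : list G, Forall P l /\ prodl l = g.

Definition gen_group (P : G -> Prop) (g : G) : Prop :=
  exists w : list (bool * G), Forall (fun p => P (snd p)) w /\ eval_word w = g.

Definition is_lattice (le : G -> G -> Prop) : Prop :=
  (forall a b, exists m, le m a /\ le m b /\ forall c, le c a -> le c b -> le c m) /\
  (forall a b, exists j, le a j /\ le b j /\ forall c, le a c -> le b c -> le j c).

Definition garside_structure (M : G -> Prop) (Delta : G) : Prop :=
  is_submonoid M /\ pointed M /\
  balanced M Delta /\ noetherian M /\ finite_pred (Div M Delta) /\
  (forall a, M a <-> gen_monoid (Div M Delta) a) /\
  (forall g, gen_group (Div M Delta) g) /\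
  is_lattice (leL M).

(* (H, N, δ) parabolic substructure: H and N are determined by δ *)
Definition Hsub (M : G -> Prop) (delta : G) : G -> Prop := gen_group (Div M delta).
Definition Nsub (M : G -> Prop) (delta : G) : G -> Prop := gen_monoid (Div M delta).

Definition parabolic_substructure (M : G -> Prop) (Delta delta : G) : Prop :=
  M delta /\ balanced M delta /\
  forall b, Div M delta b <-> (Div M Delta b /\ Nsub M delta b).

Definition Sgen (M : G -> Prop) (Delta : G) (s : G) : Prop := Div M Delta s /\ s <> one.

Definition lg_le (S : G -> Prop) (g : G) (n : nat) : Prop :=
  exists w : list (bool * G), Forall (fun p => S (snd p)) w /\ eval_word w = g /\ length w <= n.

Definition lg_is (S : G -> Prop) (g : G) (n : nat) : Prop :=
  lg_le S g n /\ forall m, lg_le S g m -> n <= m.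

Definition dist_is (S : G -> Prop) (a b : G) (n : nat) : Prop := lg_is S (mul (inv a) b) n.
Definition dist_le (S : G -> Prop) (a b : G) (n : nat) : Prop := lg_le S (mul (inv a) b) n.

Definition proj (S : G -> Prop) (H : G -> Prop) (alpha beta : G) : Prop :=
  H beta /\ exists n, dist_is S alpha beta n /\
    forall beta' m, H beta' -> dist_is S alpha beta' m -> n <= m.

End GroupDefs.

(* Order G by [x ≼ y] iff [x^-1 y ∈ M]. The word length is read off Δ-powers:
   [d(x, y) <= n] iff [x Δ^a ≼ y ≼ x Δ^b] for some [a <= 0 <= b] with [b - a <= n].
   Because prefixes of elements of [N] stay in [N], the parabolic subgroup [H] is convex
   for [≼], and it is closed under meets and joins. Let [β1 ∈ π_H(α1)] and let [γ] realise
   [D = d(α2, H)]. Clamping [β1] by a join and a meet into a window [[α2 Δ^-k, α2 Δ^(D-k)]]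
   of width [D] yields an element between [β1 ∧ γ] and [β1 ∨ γ], hence in [H]; it is a
   projection of [α2], and its distance from [β1] is at most [d(α2, β1) - D <= 2]. So the
   constant 5 can in fact be replaced by 2. *)

From Pilot Require Import Defs.
From Stdlib Require Import List ZArith Lia Classical Wf_nat.
Import ListNotations.

Section GarsideFellowProjections.
Context {G : Type} (mul : G -> G -> G) (one : G) (inv : G -> G).
Hypothesis Hg : is_group mul one inv.
Local Infix "**" := mul (at level 40, left associativity).

Lemma mulgA x y z : x ** (y ** z) = x ** y ** z. Proof. apply Hg. Qed.
Lemma mul1g x : one ** x = x. Proof. apply Hg. Qed.
Lemma mulg1 x : x ** one = x. Proof. apply Hg. Qed.
Lemma mulVg x : inv x ** x = one. Proof. apply Hg. Qed.
Lemma mulgV x : x ** inv x = one. Proof. apply Hg. Qed.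
Lemma mulKg x y : inv x ** (x ** y) = y. Proof. now rewrite mulgA, mulVg, mul1g. Qed.
Lemma mulKVg x y : x ** (inv x ** y) = y. Proof. now rewrite mulgA, mulgV, mul1g. Qed.

Lemma inv_of_mulg_eq1 x y : x ** y = one -> inv x = y.
Proof. intro E. now rewrite <- (mulg1 (inv x)), <- E, mulKg. Qed.

Lemma invMg x y : inv (x ** y) = inv y ** inv x.
Proof. apply inv_of_mulg_eq1. now rewrite <- mulgA, (mulgA y), mulgV, mul1g, mulgV. Qed.

Lemma invgK x : inv (inv x) = x. Proof. apply inv_of_mulg_eq1, mulVg. Qed.
Lemma invg1 : inv one = one. Proof. apply inv_of_mulg_eq1, mul1g. Qed.

Ltac gsimpl :=
  repeat rewrite <- ?mulgA, ?mul1g, ?mulg1, ?mulVg, ?mulgV, ?mulKg, ?mulKVg,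
    ?invMg, ?invgK, ?invg1;
  try reflexivity.

Lemma commute_invl x y : x ** y = y ** x -> inv x ** y = y ** inv x.
Proof.
  intro Hxy. rewrite <- (mulg1 (inv x ** y)), <- (mulgV x), <- !mulgA, (mulgA y x), <- Hxy.
  gsimpl.
Qed.

Section Powers.
Variable e : G.

Definition pw (n : nat) : G := Nat.iter n (mul e) one.

Definition zpow (z : Z) : G := pw (Z.to_nat z) ** inv (pw (Z.to_nat (- z))).

Lemma pw0 : pw 0 = one. Proof. reflexivity. Qed.
Lemma pwS n : pw (S n) = e ** pw n. Proof. reflexivity. Qed.

Lemma pw_add m n : pw (m + n) = pw m ** pw n.
Proof.
  induction m as [|m IH]; [symmetry; apply mul1g |].
  now rewrite Nat.add_succ_l, !pwS, IH, mulgA.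
Qed.

Lemma pwSr n : pw (S n) = pw n ** e.
Proof. now rewrite <- Nat.add_1_r, pw_add, pwS, mulg1. Qed.

Lemma pw_comm m n : pw m ** pw n = pw n ** pw m.
Proof. now rewrite <- !pw_add, Nat.add_comm. Qed.

Lemma zpow_sub_nat m n : zpow (Z.of_nat m - Z.of_nat n) = pw m ** inv (pw n).
Proof.
  unfold zpow. destruct (le_lt_dec n m).
  - replace (Z.to_nat (Z.of_nat m - Z.of_nat n)) with (m - n) by lia.
    replace (Z.to_nat (- (Z.of_nat m - Z.of_nat n))) with 0 by lia.
    replace m with (m - n + n) at 2 by lia. rewrite pw_add, pw0. gsimpl.
  - replace (Z.to_nat (Z.of_nat m - Z.of_nat n)) with 0 by lia.
    replace (Z.to_nat (- (Z.of_nat m - Z.of_nat n))) with (n - m) by lia.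
    replace n with (n - m + m) at 2 by lia. rewrite pw_add, pw0. gsimpl.
Qed.

Lemma zpow_add a b : zpow (a + b) = zpow a ** zpow b.
Proof.
  assert (Hsplit : forall z, z = (Z.of_nat (Z.to_nat z) - Z.of_nat (Z.to_nat (- z)))%Z) by lia.
  rewrite (Hsplit a), (Hsplit b).
  set (a1 := Z.to_nat a); set (a2 := Z.to_nat (- a)).
  set (b1 := Z.to_nat b); set (b2 := Z.to_nat (- b)).
  replace (Z.of_nat a1 - Z.of_nat a2 + (Z.of_nat b1 - Z.of_nat b2))%Z
    with (Z.of_nat (a1 + b1) - Z.of_nat (a2 + b2))%Z by lia.
  rewrite !zpow_sub_nat, !pw_add, (pw_comm a2 b2), invMg, <- !mulgA.
  now rewrite (mulgA (inv (pw a2))), (commute_invl _ _ (pw_comm a2 b1)), <- mulgA.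
Qed.

Lemma zpow0 : zpow 0 = one. Proof. unfold zpow. simpl. gsimpl. Qed.

Lemma zpow_nat n : zpow (Z.of_nat n) = pw n.
Proof.
  replace (Z.of_nat n) with (Z.of_nat n - Z.of_nat 0)%Z by lia.
  rewrite zpow_sub_nat, pw0. gsimpl.
Qed.

Lemma zpow1 : zpow 1 = e.
Proof. change 1%Z with (Z.of_nat 1). rewrite zpow_nat. simpl. gsimpl. Qed.

Lemma zpow_opp a : zpow (- a) = inv (zpow a).
Proof.
  symmetry. apply inv_of_mulg_eq1. now rewrite <- zpow_add, Z.add_opp_diag_r, zpow0.
Qed.

Lemma zpowN1 : zpow (-1) = inv e.
Proof. change (-1)%Z with (Z.opp 1). now rewrite zpow_opp, zpow1. Qed.

End Powers.

Section WordLength.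
Local Notation EW := (eval_word mul one inv).
Local Notation PL := (prodl mul one).

Lemma prodl_app l1 l2 : PL (l1 ++ l2) = PL l1 ** PL l2.
Proof.
  induction l1 as [|x l IH]; simpl; [gsimpl |].
  unfold prodl in *; simpl. rewrite IH. gsimpl.
Qed.

Lemma eval_word_app w1 w2 : EW (w1 ++ w2) = EW w1 ** EW w2.
Proof. unfold eval_word. rewrite map_app. apply prodl_app. Qed.

Lemma eval_word_cons p w : EW (p :: w) = letter inv p ** EW w.
Proof. reflexivity. Qed.

Lemma word_inv (P : G -> Prop) w : Forall (fun p => P (snd p)) w ->
  exists w', Forall (fun p => P (snd p)) w' /\ EW w' = inv (EW w) /\ length w' = length w.
Proof.
  induction 1 as [|[sgn s] w Hs Hw [w' [Hw' [E Hlen]]]].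
  - exists []. simpl. split; [constructor | split; [unfold eval_word; simpl; gsimpl | reflexivity]].
  - exists (w' ++ [(negb sgn, s)]). split; [| split].
    + apply Forall_app. split; [exact Hw' | constructor; [exact Hs | constructor]].
    + rewrite eval_word_app, E, !eval_word_cons. unfold eval_word at 2. simpl.
      destruct sgn; unfold letter; simpl; gsimpl.
    + rewrite length_app, Hlen. simpl. lia.
Qed.

Variable S : G -> Prop.
Local Notation lg_le := (lg_le mul one inv S).
Local Notation dist_le := (dist_le mul one inv S).

Lemma lg_le_mono g n m : lg_le g n -> n <= m -> lg_le g m.
Proof. intros [w [Hw [E Hlen]]] Hnm. exists w. repeat split; auto. lia. Qed.

Lemma lg_le_one : lg_le one 0.
Proof. exists []. repeat split; auto. Qed.

Lemma lg_le_gen s : S s -> lg_le s 1.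
Proof.
  intro Hs. exists [(true, s)]. split; [repeat constructor; exact Hs |].
  split; [unfold eval_word, prodl; simpl; gsimpl | reflexivity].
Qed.

Lemma lg_le_mul x y n m : lg_le x n -> lg_le y m -> lg_le (x ** y) (n + m).
Proof.
  intros [w [Hw [<- Hn]]] [w' [Hw' [<- Hm]]]. exists (w ++ w'). repeat split.
  - apply Forall_app; auto.
  - apply eval_word_app.
  - rewrite length_app. lia.
Qed.

Lemma lg_le_inv g n : lg_le g n -> lg_le (inv g) n.
Proof.
  intros [w [Hw [<- Hn]]]. destruct (word_inv S w Hw) as [w' [Hw' [E Hlen]]].
  exists w'. repeat split; auto. lia.
Qed.

Lemma dist_le_sym x y n : dist_le x y n -> dist_le y x n.
Proof.
  intro Hxy. unfold Defs.dist_le. replace (inv y ** x) with (inv (inv x ** y)) by gsimpl.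
  now apply lg_le_inv.
Qed.

Lemma dist_le_trans x y z n m : dist_le x y n -> dist_le y z m -> dist_le x z (n + m).
Proof.
  intros Hxy Hyz. unfold Defs.dist_le.
  replace (inv x ** z) with ((inv x ** y) ** (inv y ** z)) by gsimpl.
  now apply lg_le_mul.
Qed.

Lemma nat_least (P : nat -> Prop) n : P n -> exists k, P k /\ forall m, P m -> k <= m.
Proof.
  intro Hn. destruct (dec_inh_nat_subset_has_unique_least_element P (fun m => classic (P m)))
    as [k [Hk _]]; eauto.
Qed.

Lemma lg_is_of_lg_le g n : lg_le g n -> exists m, m <= n /\ lg_is mul one inv S g m.
Proof.
  intro Hn. destruct (nat_least _ _ Hn) as [k [Hk Hmin]]. exists k. split; [apply Hmin, Hn |].
  split; assumption.
Qed.

Lemma proj_iff (H : G -> Prop) alpha beta :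
  proj mul one inv S H alpha beta <->
  H beta /\ exists n, dist_le alpha beta n /\
    forall beta' m, H beta' -> dist_le alpha beta' m -> n <= m.
Proof.
  split.
  - intros [Hb [n [[Hn _] Hmin]]]. split; [exact Hb |]. exists n. split; [exact Hn |].
    intros beta' m Hb' Hm. destruct (lg_is_of_lg_le _ _ Hm) as [m' [Hm' Hexact]].
    specialize (Hmin beta' m' Hb' Hexact). lia.
  - intros [Hb [n [Hn Hmin]]]. split; [exact Hb |]. exists n. split.
    + split; [exact Hn |]. intros m Hm. exact (Hmin beta m Hb Hm).
    + intros beta' m Hb' [Hm _]. exact (Hmin beta' m Hb' Hm).
Qed.

Lemma proj_exists (H : G -> Prop) alpha h n : H h -> dist_le alpha h n ->
  exists D gam, H gam /\ dist_le alpha gam D /\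
    forall beta m, H beta -> dist_le alpha beta m -> D <= m.
Proof.
  intros Hh Hn. destruct (nat_least (fun m => exists gam, H gam /\ dist_le alpha gam m) n)
    as [D [[gam [Hgam HD]] Hmin]]; [eauto |].
  exists D, gam. split; [exact Hgam | split; [exact HD |]].
  intros beta m Hb Hm. apply Hmin. eauto.
Qed.

End WordLength.

Section Garside.
Variables (M : G -> Prop) (Delta : G).
Hypothesis HG : garside_structure mul one inv M Delta.
Local Notation "x ≼ y" := (M (inv x ** y)) (at level 70, no associativity).
Local Notation Div_Delta := (Div mul inv M Delta).
Local Notation Sg := (Sgen mul one inv M Delta).
Local Notation zD := (zpow Delta).

Lemma M_one : M one. Proof. destruct HG as [[Hone _] _]. exact Hone. Qed.
Lemma M_mul x y : M x -> M y -> M (x ** y). Proof. destruct HG as [[_ Hmul] _]. apply Hmul. Qed.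
Lemma M_pointed x : M x -> M (inv x) -> x = one. Proof. destruct HG as [_ [Hpt _]]. apply Hpt. Qed.
Lemma balanced_Delta : balanced mul inv M Delta.
Proof. destruct HG as (_ & _ & Hb & _). exact Hb. Qed.
Lemma M_gen x : M x <-> gen_monoid mul one Div_Delta x.
Proof. destruct HG as (_ & _ & _ & _ & _ & Hgen & _). apply Hgen. Qed.

Lemma leL_refl x : x ≼ x. Proof. rewrite mulVg. apply M_one. Qed.

Lemma leL_trans x y z : x ≼ y -> y ≼ z -> x ≼ z.
Proof.
  intros Hxy Hyz. replace (inv x ** z) with ((inv x ** y) ** (inv y ** z)) by gsimpl.
  now apply M_mul.
Qed.

Lemma leL_mul2l c x y : x ≼ y -> c ** x ≼ c ** y.
Proof. now gsimpl. Qed.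

Lemma M_iff_one_le x : M x <-> one ≼ x.
Proof. now gsimpl. Qed.

Lemma M_le_one x : M x -> x ≼ one -> x = one.
Proof. rewrite mulg1. apply M_pointed. Qed.

Lemma M_le x y : M x -> x ≼ y -> M y.
Proof. intros Hx Hxy. replace y with (x ** (inv x ** y)) by gsimpl. now apply M_mul. Qed.

Definition is_meet a b m : Prop := m ≼ a /\ m ≼ b /\ forall c, c ≼ a -> c ≼ b -> c ≼ m.
Definition is_join a b j : Prop := a ≼ j /\ b ≼ j /\ forall c, a ≼ c -> b ≼ c -> j ≼ c.

Lemma meet_exists a b : exists m, is_meet a b m.
Proof. destruct HG as (_ & _ & _ & _ & _ & _ & _ & [Hmeet _]). apply Hmeet. Qed.
Lemma join_exists a b : exists j, is_join a b j.
Proof. destruct HG as (_ & _ & _ & _ & _ & _ & _ & [_ Hjoin]). apply Hjoin. Qed.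

Section Balanced.
Variable e : G.
Hypothesis He : balanced mul inv M e.

Lemma div_rdiv t : Div mul inv M e t -> M (e ** inv t).
Proof. intro Ht. apply (proj2 He) in Ht. apply Ht. Qed.

Lemma div_rcompl t : Div mul inv M e t -> Div mul inv M e (inv t ** e).
Proof.
  intro Ht. apply (proj2 He). split; [apply Ht |]. unfold leR.
  replace (e ** inv (inv t ** e)) with t by gsimpl. apply Ht.
Qed.

Lemma div_lcompl t : Div mul inv M e t -> Div mul inv M e (e ** inv t).
Proof.
  intro Ht. split; [now apply div_rdiv |]. unfold leL.
  replace (inv (e ** inv t) ** e) with t by gsimpl. apply Ht.
Qed.

Lemma div_conj_pw k t : Div mul inv M e t ->
  Div mul inv M e (inv (pw e k) ** t ** pw e k) /\ Div mul inv M e (pw e k ** t ** inv (pw e k)).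
Proof.
  intro Ht. induction k as [|k [IHl IHr]]; [rewrite pw0; gsimpl; auto |]. split.
  - replace (inv (pw e (S k)) ** t ** pw e (S k))
      with (inv (inv (inv (pw e k) ** t ** pw e k) ** e) ** e) by (rewrite pwSr; gsimpl).
    now apply div_rcompl, div_rcompl.
  - replace (pw e (S k) ** t ** inv (pw e (S k)))
      with (e ** inv (e ** inv (pw e k ** t ** inv (pw e k)))) by (rewrite pwS; gsimpl).
    now apply div_lcompl, div_lcompl.
Qed.

End Balanced.

Lemma M_conj_pw k x : M x ->
  M (inv (pw Delta k) ** x ** pw Delta k) /\ M (pw Delta k ** x ** inv (pw Delta k)).
Proof.
  intros Hx%M_gen. destruct Hx as [l [Hl <-]].
  induction Hl as [|s l Hs _ [IHl IHr]]; [unfold prodl; simpl; gsimpl; split; apply M_one |].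
  destruct (div_conj_pw Delta balanced_Delta k s Hs) as [[Hsl _] [Hsr _]].
  change (prodl mul one (s :: l)) with (s ** prodl mul one l). split.
  - replace (inv (pw Delta k) ** (s ** prodl mul one l) ** pw Delta k)
      with ((inv (pw Delta k) ** s ** pw Delta k) **
            (inv (pw Delta k) ** prodl mul one l ** pw Delta k)) by gsimpl.
    now apply M_mul.
  - replace (pw Delta k ** (s ** prodl mul one l) ** inv (pw Delta k))
      with ((pw Delta k ** s ** inv (pw Delta k)) **
            (pw Delta k ** prodl mul one l ** inv (pw Delta k))) by gsimpl.
    now apply M_mul.
Qed.

Lemma M_conj_zpow a x : M x -> M (inv (zD a) ** x ** zD a).
Proof.
  intro Hx. unfold zpow.
  replace (inv (pw Delta (Z.to_nat a) ** inv (pw Delta (Z.to_nat (- a)))) ** x **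
           (pw Delta (Z.to_nat a) ** inv (pw Delta (Z.to_nat (- a)))))
    with (pw Delta (Z.to_nat (- a)) **
          (inv (pw Delta (Z.to_nat a)) ** x ** pw Delta (Z.to_nat a)) **
          inv (pw Delta (Z.to_nat (- a)))) by gsimpl.
  now apply M_conj_pw, M_conj_pw.
Qed.

Lemma leL_mul2r_zpow c x y : x ≼ y -> x ** zD c ≼ y ** zD c.
Proof.
  intro Hxy. replace (inv (x ** zD c) ** (y ** zD c)) with (inv (zD c) ** (inv x ** y) ** zD c)
    by gsimpl.
  now apply M_conj_zpow.
Qed.

Lemma M_zpow a : (0 <= a)%Z -> M (zD a).
Proof.
  intro Ha. rewrite <- (Z2Nat.id a Ha), zpow_nat.
  induction (Z.to_nat a) as [|n IH]; [apply M_one |].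
  rewrite pwS. apply M_mul; [apply (proj1 balanced_Delta) | exact IH].
Qed.

Lemma mul_zpowA x a b : x ** zD a ** zD b = x ** zD (a + b).
Proof. now rewrite zpow_add, mulgA. Qed.

Lemma leL_zpow2l x a b : (a <= b)%Z -> x ** zD a ≼ x ** zD b.
Proof.
  intro Hab. apply leL_mul2l. rewrite <- zpow_opp, <- zpow_add. apply M_zpow. lia.
Qed.

Lemma mul_zpow_leL x a : (a <= 0)%Z -> x ** zD a ≼ x.
Proof. intro Ha. rewrite <- (mulg1 x) at 2. rewrite <- (zpow0 Delta). now apply leL_zpow2l. Qed.

Lemma leL_mul_zpow x b : (0 <= b)%Z -> x ≼ x ** zD b.
Proof. intro Hb. rewrite <- (mulg1 x) at 1. rewrite <- (zpow0 Delta). now apply leL_zpow2l. Qed.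

Lemma leL_zpow_shiftr x y a c b : x ≼ y ** zD a -> (a + c = b)%Z -> x ** zD c ≼ y ** zD b.
Proof. intros Hxy <-. rewrite <- mul_zpowA. now apply leL_mul2r_zpow. Qed.

Lemma leL_zpow_shiftl x y a c b : x ** zD a ≼ y -> (a + c = b)%Z -> x ** zD b ≼ y ** zD c.
Proof. intros Hxy <-. rewrite <- mul_zpowA. now apply leL_mul2r_zpow. Qed.

Definition in_window (x : G) (a b : Z) (y : G) : Prop := x ** zD a ≼ y /\ y ≼ x ** zD b.

Lemma in_window_widen x a b a' b' y :
  in_window x a b y -> (a' <= a)%Z -> (b <= b')%Z -> in_window x a' b' y.
Proof.
  intros [Hlo Hhi] Ha Hb. split.
  - eapply leL_trans; [apply leL_zpow2l, Ha | exact Hlo].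
  - eapply leL_trans; [exact Hhi | apply leL_zpow2l, Hb].
Qed.

Lemma in_window_trans x y w a b c d :
  in_window x a b y -> in_window y c d w -> in_window x (a + c) (b + d) w.
Proof.
  intros [Hxy Hyx] [Hyw Hwy]. split.
  - eapply leL_trans; [| exact Hyw]. rewrite <- mul_zpowA. now apply leL_mul2r_zpow.
  - eapply leL_trans; [exact Hwy |]. rewrite <- mul_zpowA. now apply leL_mul2r_zpow.
Qed.

Lemma in_window_letter x p : Div_Delta (snd p) ->
  exists a b, (a <= 0)%Z /\ (0 <= b)%Z /\ (b - a <= 1)%Z /\ in_window x a b (x ** letter inv p).
Proof.
  destruct p as [[|] s]; intros [Hs HsD]; unfold letter; cbn [fst snd] in *.
  - exists 0%Z, 1%Z. do 3 (split; [lia |]). split; rewrite ?zpow0, ?zpow1; gsimpl; assumption.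
  - exists (-1)%Z, 0%Z. do 3 (split; [lia |]).
    split; rewrite ?zpow0, ?zpowN1; gsimpl; [| assumption].
    apply div_rdiv; [apply balanced_Delta | split; assumption].
Qed.

Lemma in_window_word x w : Forall (fun p => Sg (snd p)) w ->
  exists a b, (a <= 0)%Z /\ (0 <= b)%Z /\ (b - a <= Z.of_nat (length w))%Z /\
    in_window x a b (x ** eval_word mul one inv w).
Proof.
  intro Hw. revert x. induction Hw as [|p w [Hp _] _ IH]; intro x.
  - exists 0%Z, 0%Z. do 3 (split; [simpl; lia |]). unfold eval_word; simpl.
    split; rewrite zpow0, mulg1; apply leL_refl.
  - destruct (in_window_letter x p Hp) as [a1 [b1 [Ha1 [Hb1 [Hab1 Hw1]]]]].
    destruct (IH (x ** letter inv p)) as [a2 [b2 [Ha2 [Hb2 [Hab2 Hw2]]]]].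
    exists (a1 + a2)%Z, (b1 + b2)%Z. simpl length. do 3 (split; [lia |]).
    rewrite eval_word_cons, mulgA. exact (in_window_trans _ _ _ _ _ _ _ Hw1 Hw2).
Qed.

Lemma in_window_of_dist_le x y n : dist_le mul one inv Sg x y n ->
  exists a b, (a <= 0)%Z /\ (0 <= b)%Z /\ (b - a <= Z.of_nat n)%Z /\ in_window x a b y.
Proof.
  intros [w [Hw [E Hlen]]]. destruct (in_window_word x w Hw) as [a [b [Ha [Hb [Hab Hwin]]]]].
  rewrite E, mulKVg in Hwin. exists a, b. do 3 (split; [lia |]). exact Hwin.
Qed.

Lemma lg_le_div t : Div_Delta t -> lg_le mul one inv Sg t 1.
Proof.
  intro Ht. destruct (classic (t = one)) as [-> | Hne].
  - apply (lg_le_mono _ _ 0); [apply lg_le_one | lia].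
  - apply lg_le_gen. split; assumption.
Qed.

(* Greedy factorisation: peel off the simple [(m ∧ Δ^n)^-1 m] at each step. *)
Lemma lg_le_of_le_zpow (n : nat) m : M m -> m ≼ zD (Z.of_nat n) -> lg_le mul one inv Sg m n.
Proof.
  revert m; induction n as [|n IH]; intros m Hm Hle.
  - rewrite zpow0 in Hle. rewrite (M_le_one m Hm Hle). apply lg_le_one.
  - destruct (meet_exists m (zD (Z.of_nat n))) as [a [Ham [Han Hmeet]]].
    assert (Ha : M a).
    { apply M_iff_one_le, Hmeet; rewrite invg1, mul1g; [exact Hm | apply M_zpow; lia]. }
    assert (Hma : m ** inv Delta ≼ a).
    { apply Hmeet.
      - gsimpl. apply (proj1 balanced_Delta).
      - rewrite <- (zpowN1 Delta), <- (mul1g (zD (Z.of_nat n))).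
        apply (leL_zpow_shiftr _ _ (Z.of_nat (S n))); [rewrite mul1g; exact Hle | lia]. }
    assert (Hr : Div_Delta (inv a ** m)).
    { split; [exact Ham |]. unfold leL.
      apply (leL_mul2r_zpow 1) in Hma. rewrite zpow1 in Hma. now revert Hma; gsimpl. }
    replace m with (a ** (inv a ** m)) by gsimpl. rewrite <- Nat.add_1_r.
    apply lg_le_mul; [now apply IH | now apply lg_le_div].
Qed.

(* Write [g = u (u^-1 g)] with [u = g ∧ 1], so that [1 ≼ u^-1 ≼ Δ^-a] and
   [1 ≼ u^-1 g ≼ Δ^b]. *)
Lemma lg_le_of_zpow_bounds g a b n : (a <= 0)%Z -> (0 <= b)%Z -> (b - a <= Z.of_nat n)%Z ->
  zD a ≼ g -> g ≼ zD b -> lg_le mul one inv Sg g n.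
Proof.
  intros Ha Hb Hab Hag Hgb.
  destruct (meet_exists g one) as [u [Hug [Hu1 Hmeet]]].
  assert (Hau : zD a ≼ u).
  { apply Hmeet; [exact Hag |]. rewrite mulg1, <- zpow_opp. apply M_zpow. lia. }
  assert (Hgu : g ** zD (- b) ≼ u).
  { apply Hmeet; [apply mul_zpow_leL; lia |].
    apply (leL_mul2r_zpow (- b)) in Hgb. rewrite zpow_opp in *. now revert Hgb; gsimpl. }
  replace g with (u ** (inv u ** g)) by gsimpl.
  apply (lg_le_mono _ _ (Z.to_nat (- a) + Z.to_nat b)); [| lia].
  apply lg_le_mul.
  - rewrite <- (invgK u). apply lg_le_inv, lg_le_of_le_zpow.
    { rewrite <- (mulg1 (inv u)). exact Hu1. }
    rewrite Z2Nat.id by lia. apply (leL_mul2r_zpow (- a)) in Hau.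
    rewrite zpow_opp in *. now revert Hau; gsimpl.
  - apply lg_le_of_le_zpow; [exact Hug |]. rewrite Z2Nat.id by lia.
    apply (leL_mul2r_zpow b) in Hgu. rewrite zpow_opp in Hgu. now revert Hgu; gsimpl.
Qed.

Lemma dist_le_of_in_window x y a b n : (a <= 0)%Z -> (0 <= b)%Z -> (b - a <= Z.of_nat n)%Z ->
  in_window x a b y -> dist_le mul one inv Sg x y n.
Proof.
  intros Ha Hb Hab [Hlo Hhi]. apply (lg_le_of_zpow_bounds _ a b); auto; revert Hlo Hhi; now gsimpl.
Qed.

Section Parabolic.
Variable delta : G.
Hypothesis HP : parabolic_substructure mul one inv M Delta delta.
Local Notation Div_delta := (Div mul inv M delta).
Local Notation Npar := (Defs.Nsub mul one inv M delta).
Local Notation Hpar := (Hsub mul one inv M delta).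

Lemma balanced_delta : balanced mul inv M delta. Proof. destruct HP as (_ & Hb & _). exact Hb. Qed.

Lemma div_delta_iff b : Div_delta b <-> Div_Delta b /\ Npar b.
Proof. destruct HP as (_ & _ & Hdiv). apply Hdiv. Qed.

Lemma Nsub_one : Npar one. Proof. exists []. split; auto. Qed.

Lemma Nsub_mul x y : Npar x -> Npar y -> Npar (x ** y).
Proof.
  intros [l [Hl <-]] [l' [Hl' <-]]. exists (l ++ l').
  split; [apply Forall_app; auto | apply prodl_app].
Qed.

Lemma Nsub_div s : Div_delta s -> Npar s.
Proof.
  intro Hs. exists [s].
  split; [constructor; [exact Hs | constructor] | unfold prodl; simpl; gsimpl].
Qed.

Lemma Nsub_pw k : Npar (pw delta k).
Proof.
  induction k as [|k IH]; [exact Nsub_one |]. rewrite pwS. apply Nsub_mul; [| exact IH].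
  apply Nsub_div. split; [apply (proj1 balanced_delta) | apply leL_refl].
Qed.

Lemma M_of_Nsub x : Npar x -> M x.
Proof.
  intros [l [Hl <-]]. induction Hl as [|s l Hs _ IH]; [apply M_one |].
  apply M_mul; [apply Hs | exact IH].
Qed.

Lemma Hsub_mul x y : Hpar x -> Hpar y -> Hpar (x ** y).
Proof.
  intros [w [Hw <-]] [w' [Hw' <-]]. exists (w ++ w').
  split; [apply Forall_app; auto | apply eval_word_app].
Qed.

Lemma Hsub_inv x : Hpar x -> Hpar (inv x).
Proof.
  intros [w [Hw <-]]. destruct (word_inv _ w Hw) as [w' [Hw' [E _]]]. now exists w'.
Qed.

Lemma Hsub_of_Nsub x : Npar x -> Hpar x.
Proof.
  intros [l [Hl <-]]. exists (map (pair true) l). split.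
  - apply Forall_map. exact Hl.
  - induction l as [|s l IH]; [reflexivity |]. inversion_clear Hl.
    rewrite map_cons, eval_word_cons, IH by assumption. reflexivity.
Qed.

(* Induct on a [δ]-factorisation [x = s y]: the join [v ∨ s] is a simple of the form [s t]
   with [t ≼ y], so it lies in [N] and hence in [Div δ]. *)
Lemma div_prefix_Nsub x v : Npar x -> Div_Delta v -> v ≼ x -> Div_delta v /\ Npar (inv v ** x).
Proof.
  intros [l [Hl <-]]. revert v. induction Hl as [|s l Hs Hl IH]; intros v Hv Hvx.
  - change (prodl mul one []) with one in *. rewrite (M_le_one v (proj1 Hv) Hvx). gsimpl.
    split; [| apply Nsub_one].
    split; [apply M_one | unfold leL; gsimpl; apply (proj1 balanced_delta)].
  - change (prodl mul one (s :: l)) with (s ** prodl mul one l) in *.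
    set (y := prodl mul one l) in *.
    assert (HsD : Div_Delta s) by (apply div_delta_iff; exact Hs).
    destruct (join_exists v s) as [w [Hvw [Hsw Hjoin]]].
    assert (HwD : w ≼ Delta) by (apply Hjoin; [apply Hv | apply HsD]).
    assert (Hwy : w ≼ s ** y).
    { apply Hjoin; [exact Hvx |]. gsimpl. apply M_of_Nsub. now exists l. }
    set (t := inv s ** w).
    assert (Ht : Div_Delta t).
    { split; [exact Hsw |]. eapply leL_trans; [apply leL_mul2l, HwD |].
      apply (div_rcompl Delta balanced_Delta s HsD). }
    assert (Hty : t ≼ y) by (unfold t; now revert Hwy; gsimpl).
    destruct (IH t Ht Hty) as [Htd HtN].
    assert (Hwd : Div_delta w).
    { apply div_delta_iff. split; [split; [apply (M_le v); [apply Hv | exact Hvw] | exact HwD] |].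
      replace w with (s ** t) by (unfold t; gsimpl). apply Nsub_mul; apply Nsub_div; assumption. }
    assert (Hvd : Div_delta v) by (split; [apply Hv | eapply leL_trans; [exact Hvw | apply Hwd]]).
    split; [exact Hvd |].
    replace (inv v ** (s ** y)) with ((inv v ** w) ** (inv t ** y)) by (unfold t; gsimpl).
    apply Nsub_mul; [| exact HtN]. apply Nsub_div. split; [exact Hvw |].
    eapply leL_trans; [apply leL_mul2l, Hwd | apply (div_rcompl delta balanced_delta v Hvd)].
Qed.

Lemma Nsub_prefix u x : M u -> Npar x -> u ≼ x -> Npar u.
Proof.
  intros [l [Hl <-]]%M_gen. revert x. induction Hl as [|v l Hv Hl IH]; intros x Hx Hle.
  - exact Nsub_one.
  - change (prodl mul one (v :: l)) with (v ** prodl mul one l) in *.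
    assert (Hvx : v ≼ x).
    { eapply leL_trans; [| exact Hle]. gsimpl.
      apply M_gen. exists l. split; [exact Hl | reflexivity]. }
    destruct (div_prefix_Nsub x v Hx Hv Hvx) as [Hvd HN].
    apply Nsub_mul; [now apply Nsub_div |]. apply (IH (inv v ** x) HN). now revert Hle; gsimpl.
Qed.

Lemma Hsub_pw_bounds h : Hpar h -> exists k, inv (pw delta k) ≼ h /\ h ≼ pw delta k.
Proof.
  intros [w [Hw <-]]. induction Hw as [|[sgn s] w Hs _ [k [Hlo Hhi]]].
  - exists 0. change (eval_word mul one inv []) with one. rewrite pw0. gsimpl. split; apply M_one.
  - exists (S k). rewrite eval_word_cons. cbn [snd] in Hs.
    set (h := eval_word mul one inv w) in *.
    destruct (div_conj_pw delta balanced_delta k s Hs) as [[Hc1 Hc1'] [Hc2 Hc2']].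
    assert (HpwS : inv (pw delta (S k)) ≼ inv (pw delta k)).
    { rewrite pwS. gsimpl. apply (proj1 balanced_delta). }
    destruct sgn; unfold letter; cbn [fst snd]; split.
    + apply (leL_trans _ _ _ HpwS), (leL_trans _ (s ** inv (pw delta k))); [| now apply leL_mul2l].
      now revert Hc2; gsimpl.
    + apply (leL_trans _ (s ** pw delta k)); [now apply leL_mul2l |].
      rewrite pwSr. unfold leL in Hc1'. now revert Hc1'; gsimpl.
    + apply (leL_trans _ (inv s ** inv (pw delta k))); [| now apply leL_mul2l].
      rewrite pwS.
      replace (inv (inv (delta ** pw delta k)) ** (inv s ** inv (pw delta k)))
        with (delta ** inv (pw delta k ** s ** inv (pw delta k))) by gsimpl.
      apply (div_rdiv delta balanced_delta). split; assumption.
    + apply (leL_trans _ (inv s ** pw delta k)); [now apply leL_mul2l |].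
      rewrite pwSr.
      replace (inv (inv s ** pw delta k) ** (pw delta k ** delta))
        with ((inv (pw delta k) ** s ** pw delta k) ** delta) by gsimpl.
      apply M_mul; [exact Hc1 | apply (proj1 balanced_delta)].
Qed.

Lemma Nsub_of_Hsub_M h : Hpar h -> M h -> Npar h.
Proof.
  intros Hh HM. destruct (Hsub_pw_bounds h Hh) as [k [_ Hk]].
  exact (Nsub_prefix h (pw delta k) HM (Nsub_pw k) Hk).
Qed.

Lemma Hsub_convex l u g : Hpar l -> Hpar u -> l ≼ g -> g ≼ u -> Hpar g.
Proof.
  intros Hl Hu Hlg Hgu.
  assert (Hlu : Npar (inv l ** u)).
  { apply Nsub_of_Hsub_M; [apply Hsub_mul; [apply Hsub_inv |]; assumption |].
    exact (leL_trans _ _ _ Hlg Hgu). }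
  assert (Hlg' : Npar (inv l ** g)).
  { apply (Nsub_prefix _ (inv l ** u)); [exact Hlg | exact Hlu |]. now apply leL_mul2l. }
  replace g with (l ** (inv l ** g)) by gsimpl. now apply Hsub_mul, Hsub_of_Nsub.
Qed.

Lemma Hsub_meet h1 h2 m : Hpar h1 -> Hpar h2 -> is_meet h1 h2 m -> Hpar m.
Proof.
  intros H1 H2 [Hm1 [_ Hmeet]].
  destruct (Hsub_pw_bounds (inv h1 ** h2)) as [k [Hk _]].
  { apply Hsub_mul; [apply Hsub_inv |]; assumption. }
  apply (Hsub_convex (h1 ** inv (pw delta k)) h1); [| exact H1 | | exact Hm1].
  - apply Hsub_mul; [exact H1 |]. now apply Hsub_inv, Hsub_of_Nsub, Nsub_pw.
  - apply Hmeet; [gsimpl; apply M_of_Nsub, Nsub_pw | now revert Hk; gsimpl].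
Qed.

Lemma Hsub_join h1 h2 j : Hpar h1 -> Hpar h2 -> is_join h1 h2 j -> Hpar j.
Proof.
  intros H1 H2 [Hj1 [_ Hjoin]].
  destruct (Hsub_pw_bounds (inv h1 ** h2)) as [k [_ Hk]].
  { apply Hsub_mul; [apply Hsub_inv |]; assumption. }
  apply (Hsub_convex h1 (h1 ** pw delta k)); [exact H1 | | exact Hj1 |].
  - apply Hsub_mul; [exact H1 |]. now apply Hsub_of_Nsub, Nsub_pw.
  - apply Hjoin; [gsimpl; apply M_of_Nsub, Nsub_pw | now revert Hk; gsimpl].
Qed.

(* [z] lies between [B ∧ γ] and [B ∨ γ], both of which are in [H]. *)
Lemma Hsub_clamp B gam x y J z : Hpar B -> Hpar gam ->
  (x ≼ B \/ x ≼ gam) -> (B ≼ y \/ gam ≼ y) -> is_join B x J -> is_meet J y z -> Hpar z.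
Proof.
  intros HB Hgam Hx Hy [HBJ [HxJ Hjoin]] [HzJ [_ Hmeet]].
  destruct (meet_exists B gam) as [l Hl]. destruct (join_exists B gam) as [u Hu].
  pose proof Hl as [HlB [Hlg _]]. pose proof Hu as [HBu [Hgu _]].
  apply (Hsub_convex l u z); [now apply (Hsub_meet B gam) | now apply (Hsub_join B gam) | |].
  - apply Hmeet; [exact (leL_trans _ _ _ HlB HBJ) |].
    destruct Hy as [Hy | Hy]; [exact (leL_trans _ _ _ HlB Hy) | exact (leL_trans _ _ _ Hlg Hy)].
  - eapply leL_trans; [exact HzJ |]. apply Hjoin; [exact HBu |].
    destruct Hx as [Hx | Hx]; [exact (leL_trans _ _ _ Hx HBu) | exact (leL_trans _ _ _ Hx Hgu)].
Qed.

(* Clamp [B] into the window [α Δ^-k, α Δ^(D-k)] by a join and a meet; [k] is [j] clamped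
   into [D - Q, P]. *)
Lemma fellow_point alpha B gam (P Q D j : Z) : Hpar B -> Hpar gam ->
  (0 <= P)%Z -> (0 <= Q)%Z -> (0 <= j <= D)%Z -> (D <= P + Q)%Z ->
  in_window alpha (- P) Q B -> in_window alpha (- j) (D - j) gam ->
  exists z k, Hpar z /\ (0 <= k <= D)%Z /\ (D - Q <= k <= P)%Z /\
    in_window alpha (- k) (D - k) z /\ in_window B (D - k - Q) (P - k) z.
Proof.
  intros HB Hgam HP0 HQ0 Hj HDPQ [HB1 HB2] [Hg1 Hg2].
  set (k := Z.max (D - Q) (Z.min j P)).
  destruct (join_exists B (alpha ** zD (- k))) as [J HJ].
  destruct (meet_exists J (alpha ** zD (D - k))) as [z Hz].
  pose proof HJ as [HBJ [HxJ Hjoin]]. pose proof Hz as [HzJ [Hzy Hmeet]].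
  exists z, k. split; [| split; [lia | split; [lia | split; split]]].
  - apply (Hsub_clamp B gam (alpha ** zD (- k)) (alpha ** zD (D - k)) J z HB Hgam);
      [| | exact HJ | exact Hz].
    + assert (P <= k \/ j <= k)%Z as [Hk | Hk] by lia; [left | right].
      * refine (leL_trans _ _ _ _ HB1). apply leL_zpow2l. lia.
      * refine (leL_trans _ _ _ _ Hg1). apply leL_zpow2l. lia.
    + assert (k <= D - Q \/ k <= j)%Z as [Hk | Hk] by lia; [left | right].
      * refine (leL_trans _ _ _ HB2 _). apply leL_zpow2l. lia.
      * refine (leL_trans _ _ _ Hg2 _). apply leL_zpow2l. lia.
  - apply Hmeet; [exact HxJ | apply leL_zpow2l; lia].
  - exact Hzy.
  - apply Hmeet.
    + eapply leL_trans; [apply mul_zpow_leL; lia | exact HBJ].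
    + apply (leL_zpow_shiftr _ _ _ _ _ HB2). lia.
  - eapply leL_trans; [exact HzJ |]. apply Hjoin; [apply leL_mul_zpow; lia |].
    apply (leL_zpow_shiftl _ _ _ _ _ HB1). lia.
Qed.

Lemma fellow_projection alpha1 alpha2 beta1 :
  dist_le mul one inv Sg alpha1 alpha2 1 -> proj mul one inv Sg Hpar alpha1 beta1 ->
  exists beta2, proj mul one inv Sg Hpar alpha2 beta2 /\ dist_le mul one inv Sg beta1 beta2 2.
Proof.
  intros H12 [HB [D [HB1 HDmin]]]%proj_iff.
  assert (HB2 : dist_le mul one inv Sg alpha2 beta1 (1 + D))
    by (apply (dist_le_trans _ _ alpha1); [apply dist_le_sym |]; assumption).
  destruct (in_window_of_dist_le _ _ _ HB2) as [a [b [Ha [Hb [Hab HwB]]]]].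
  destruct (proj_exists _ _ _ _ _ HB HB2) as [D2 [gam [Hgam [Hg2 HD2min]]]].
  destruct (in_window_of_dist_le _ _ _ Hg2) as [a2 [b2 [Ha2 [Hb2 [Hab2 Hwg]]]]].
  assert (HD : D <= 1 + D2)
    by (apply (HDmin gam); [| apply (dist_le_trans _ _ alpha2)]; assumption).
  assert (HD2 : D2 <= Z.to_nat (b - a))
    by (apply (HD2min beta1); [| apply (dist_le_of_in_window _ _ a b)]; auto; lia).
  destruct (fellow_point alpha2 beta1 gam (- a) b (Z.of_nat D2) (- a2) HB Hgam)
    as [z [k [Hz [Hk [HkPQ [Hwz HwBz]]]]]]; try lia;
    [apply (in_window_widen _ _ _ _ _ _ HwB) | apply (in_window_widen _ _ _ _ _ _ Hwg) |]; try lia.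
  exists z. split.
  - apply proj_iff. split; [exact Hz |]. exists D2. split; [| exact HD2min].
    apply (dist_le_of_in_window _ _ (- k) (Z.of_nat D2 - k)); auto; lia.
  - apply (dist_le_of_in_window _ _ (Z.of_nat D2 - k - b) (- a - k)); auto; lia.
Qed.

End Parabolic.
End Garside.
End GarsideFellowProjections.

Theorem theorem5p5 (G : Type) (mul : G -> G -> G) (one : G) (inv : G -> G)
  (M : G -> Prop) (Delta delta : G) :
  is_group mul one inv ->
  garside_structure mul one inv M Delta ->
  parabolic_substructure mul one inv M Delta delta ->
  (exists h, Hsub mul one inv M delta h /\ h <> one) ->
  forall alpha1 alpha2 beta1 : G,
    dist_is mul one inv (Sgen mul one inv M Delta) alpha1 alpha2 1 ->
    proj mul one inv (Sgen mul one inv M Delta) (Hsub mul one inv M delta) alpha1 beta1 ->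
    exists beta2 : G,
      proj mul one inv (Sgen mul one inv M Delta) (Hsub mul one inv M delta) alpha2 beta2 /\
      dist_le mul one inv (Sgen mul one inv M Delta) beta1 beta2 5.
Proof.
  intros Hg HG HP _ alpha1 alpha2 beta1 [H12 _] Hproj.
  destruct (fellow_projection mul one inv Hg M Delta HG delta HP alpha1 alpha2 beta1 H12 Hproj)
    as [beta2 [Hproj2 Hdist]].
  exists beta2. split; [exact Hproj2 |]. eapply lg_le_mono; [exact Hdist | lia].
Qed.
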